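(* Let $(Q,* )$ and $(Q',\cdot)$ be automorphic loops and let $f:(Q,* )\to(Q',\cdot)$ be a half-isomorphism. If $(Q',\cdot)$ satisfies condition (C) (for all $a,b\in Q'$: $a\cdot(a\cdot b)=(b\cdot a)\cdot a$ if and only if $a\cdot b=b\cdot a$), then $(Q,* )$ also satisfies condition (C): for all $x,y\in Q$, $x*(x*y)=(y*x)*x$ if and only if $x*y=y*x$.
   Context: A loop is a set with a binary operation in which all equations $ax=b$, $ya=b$ are uniquely solvable and which has a two-sided identity. For $a\in L$, $R_a:x\mapsto xa$, $L_a:x\mapsto ax$; the inner mapping group is the stabilizer of the identity in the group generated by all $R_a,L_a$. A loop is automorphic if every inner mapping is an automorphism. A half-isomorphism between loops $(L,* )$, $(L',\cdot)$ is a bijection $f$ with $f(x*y)\in\{f(x)\cdot f(y),f(y)\cdot f(x)\}$ for all $x,y\in L$. *)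

(* Loops are possibly infinite: a loop is a type with a binary operation. *)

Section LoopDefs.
Variable T : Type.
Variable mul : T -> T -> T.

Definition is_identity (e : T) : Prop :=
  forall x, mul e x = x /\ mul x e = x.

Definition is_loop : Prop :=
  (forall a b, exists x, mul a x = b /\ forall x', mul a x' = b -> x' = x) /\
  (forall a b, exists y, mul y a = b /\ forall y', mul y' a = b -> y' = y) /\
  (exists e, is_identity e).

Definition Rmap (a : T) : T -> T := fun x => mul x a.
Definition Lmap (a : T) : T -> T := fun x => mul a x.

(* Mlt f : f belongs to the (multiplication) group of permutations of T
   generated by all R_a, L_a.  Functions are identified pointwise. *)
Inductive Mlt : (T -> T) -> Prop :=
  | Mlt_id : Mlt (fun x => x)
  | Mlt_R : forall a, Mlt (Rmap a)
  | Mlt_L : forall a, Mlt (Lmap a)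
  | Mlt_comp : forall f g, Mlt f -> Mlt g -> Mlt (fun x => f (g x))
  | Mlt_inv : forall f g, Mlt f ->
      (forall x, g (f x) = x) -> (forall x, f (g x) = x) -> Mlt g
  | Mlt_ext : forall f g, Mlt f -> (forall x, f x = g x) -> Mlt g.

Definition inner_mapping (e : T) (f : T -> T) : Prop := Mlt f /\ f e = e.

Definition is_hom (f : T -> T) : Prop := forall x y, f (mul x y) = mul (f x) (f y).

(* automorphic loop: every inner mapping is an automorphism
   (inner mappings are bijective, so being a homomorphism suffices) *)
Definition automorphic_loop : Prop :=
  is_loop /\
  forall e, is_identity e -> forall f, inner_mapping e f -> is_hom f.

Definition condC : Prop :=
  forall a b, mul a (mul a b) = mul (mul b a) a <-> mul a b = mul b a.

End LoopDefs.

Definition half_isomorphism {T T' : Type} (mul : T -> T -> T) (mul' : T' -> T' -> T')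
  (f : T -> T') : Prop :=
  (exists g : T' -> T, (forall x, g (f x) = x) /\ (forall y, f (g y) = y)) /\
  forall x y, f (mul x y) = mul' (f x) (f y) \/ f (mul x y) = mul' (f y) (f x).

(* In an automorphic loop the inner mapping T_x = R_x^-1 L_x is an automorphism
   fixing x, so x(xy) = (x T_x(y)) x and x(yx) = (xy) x.  Hence x(xy) = (xy)x
   already forces xy = yx.  Now let x(xy) = (yx)x in Q but xy <> yx, and put
   a = f x, u = f(xy), v = f(yx), so u <> v and {u, v} = {f x f y, f y f x}.
   The distinct elements x(xy) = (yx)x and (xy)x = x(yx) are sent into both
   {au, ua} and {av, va}; by cancellation this forces au = va and ua = av, and
   one of these two equations is the hypothesis of (C) for f x, f y in Q'. *)

From Stdlib Require Import Classical IndefiniteDescription.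

Section Loop.
Variable Q : Type.
Variable mul : Q -> Q -> Q.
Hypothesis Hloop : is_loop Q mul.

Lemma mul_cancel_l (a p q : Q) : mul a p = mul a q -> p = q.
Proof.
  destruct Hloop as [Hl _]; intro E.
  destruct (Hl a (mul a q)) as [x [_ Hu]].
  now rewrite (Hu p E), (Hu q eq_refl).
Qed.

Lemma mul_cancel_r (a p q : Q) : mul p a = mul q a -> p = q.
Proof.
  destruct Hloop as [_ [Hr _]]; intro E.
  destruct (Hr a (mul q a)) as [y [_ Hu]].
  now rewrite (Hu p E), (Hu q eq_refl).
Qed.

Lemma rdiv_exists (a b : Q) : exists y, mul y a = b.
Proof.
  destruct Hloop as [_ [Hr _]].
  destruct (Hr a b) as [y [Hy _]]; eauto.
Qed.

Definition rdiv (a b : Q) : Q :=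
  proj1_sig (constructive_indefinite_description _ (rdiv_exists a b)).

Lemma rdivK (a b : Q) : mul (rdiv a b) a = b.
Proof. exact (proj2_sig (constructive_indefinite_description _ (rdiv_exists a b))). Qed.

Lemma Mlt_rdiv (a : Q) : Mlt Q mul (rdiv a).
Proof.
  apply (Mlt_inv Q mul (Rmap Q mul a)); [apply Mlt_R | intro z; unfold Rmap ..].
  - apply (mul_cancel_r a), rdivK.
  - apply rdivK.
Qed.

Lemma common_products_swap (a u v s t : Q) :
  u <> v -> s <> t ->
  s = mul a u \/ s = mul u a -> s = mul v a \/ s = mul a v ->
  t = mul u a \/ t = mul a u -> t = mul a v \/ t = mul v a ->
  mul a u = mul v a /\ mul u a = mul a v.
Proof.
  intros Huv Hst Hs1 Hs2 Ht1 Ht2.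
  assert (Hl : mul a u <> mul a v) by (intro E; exact (Huv (mul_cancel_l a u v E))).
  assert (Hr : mul u a <> mul v a) by (intro E; exact (Huv (mul_cancel_r a u v E))).
  destruct Hs1, Hs2, Ht1, Ht2; split; congruence.
Qed.

End Loop.

Section AutomorphicLoop.
Variable Q : Type.
Variable mul : Q -> Q -> Q.
Hypothesis HA : automorphic_loop Q mul.

Definition Tmap (x : Q) : Q -> Q := fun z => rdiv Q mul (proj1 HA) x (mul x z).

Lemma TmapK (x z : Q) : mul (Tmap x z) x = mul x z.
Proof. apply rdivK. Qed.

Lemma Tmap_id (x : Q) : Tmap x x = x.
Proof. apply (mul_cancel_r Q mul (proj1 HA) x), TmapK. Qed.

Lemma Tmap_hom (x : Q) : is_hom Q mul (Tmap x).
Proof.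
  destruct HA as [[_ [_ [e He]]] Haut].
  apply (Haut e He); split.
  - exact (Mlt_comp Q mul _ _ (Mlt_rdiv Q mul (proj1 HA) x) (Mlt_L Q mul x)).
  - apply (mul_cancel_r Q mul (proj1 HA) x).
    rewrite TmapK; destruct (He x); congruence.
Qed.

Lemma mul_flexible (x y : Q) : mul (mul x y) x = mul x (mul y x).
Proof. now rewrite <- (TmapK x (mul y x)), Tmap_hom, Tmap_id, TmapK. Qed.

Lemma mul_xxy (x y : Q) : mul x (mul x y) = mul (mul x (Tmap x y)) x.
Proof. now rewrite <- (TmapK x (mul x y)), Tmap_hom, Tmap_id. Qed.

Lemma commute_of_xxy_eq_xyx (x y : Q) :
  mul x (mul x y) = mul (mul x y) x -> mul x y = mul y x.
Proof.
  rewrite mul_xxy; intro E.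
  apply (mul_cancel_r Q mul (proj1 HA) x), (mul_cancel_l Q mul (proj1 HA) x) in E.
  now rewrite <- E at 2; rewrite TmapK.
Qed.

Lemma xxy_of_commute (x y : Q) :
  mul x y = mul y x -> mul x (mul x y) = mul (mul y x) x.
Proof.
  intro E; rewrite mul_xxy.
  assert (Ty : Tmap x y = y) by (apply (mul_cancel_r Q mul (proj1 HA) x); now rewrite TmapK).
  now rewrite Ty, E.
Qed.

End AutomorphicLoop.

Lemma condC_swapped_products (T : Type) (mul : T -> T -> T) (a b u v : T) :
  condC T mul -> u <> v ->
  u = mul a b \/ u = mul b a -> v = mul b a \/ v = mul a b ->
  mul a u = mul v a -> mul u a = mul a v -> mul a b = mul b a.
Proof.
  intros HC Huv [-> | ->] [-> | ->] E1 E2; try contradiction; apply HC; congruence.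
Qed.

Section HalfIsomorphism.
Variables Q Q' : Type.
Variable mul : Q -> Q -> Q.
Variable mul' : Q' -> Q' -> Q'.
Variable f : Q -> Q'.
Hypothesis Hf : half_isomorphism mul mul' f.

Lemma half_iso_inj (p q : Q) : f p = f q -> p = q.
Proof.
  destruct Hf as [[g [Hgf _]] _]; intro E.
  now rewrite <- (Hgf p), <- (Hgf q), E.
Qed.

Lemma half_iso_commute (x y : Q) :
  mul' (f x) (f y) = mul' (f y) (f x) -> mul x y = mul y x.
Proof.
  destruct Hf as [_ Hmul]; intro E; apply half_iso_inj.
  destruct (Hmul x y), (Hmul y x); congruence.
Qed.

End HalfIsomorphism.

Theorem proposition4p3 (Q Q' : Type) (mul : Q -> Q -> Q) (mul' : Q' -> Q' -> Q')
  (f : Q -> Q') :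
  automorphic_loop Q mul -> automorphic_loop Q' mul' ->
  half_isomorphism mul mul' f ->
  condC Q' mul' -> condC Q mul.
Proof.
  intros HA HA' Hf HC x y; split; [intro H | apply xxy_of_commute, HA].
  apply NNPP; intro Hne.
  pose proof (proj2 Hf) as Hmul.
  pose proof (half_iso_inj _ _ _ _ f Hf) as Hinj.
  assert (Huv : f (mul x y) <> f (mul y x)) by (intro E; exact (Hne (Hinj _ _ E))).
  assert (Hzw : f (mul x (mul x y)) <> f (mul (mul x y) x)).
  { intro E; exact (Hne (commute_of_xxy_eq_xyx Q mul HA x y (Hinj _ _ E))). }
  pose proof (Hmul (mul y x) x) as Hz2; rewrite <- H in Hz2.
  pose proof (Hmul x (mul y x)) as Hw2; rewrite <- mul_flexible in Hw2 by exact HA.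
  destruct (common_products_swap Q' mul' (proj1 HA') (f x) _ _ _ _ Huv Hzw
              (Hmul x (mul x y)) Hz2 (Hmul (mul x y) x) Hw2) as [E1 E2].
  apply Hne, (half_iso_commute _ _ _ _ f Hf).
  exact (condC_swapped_products Q' mul' _ _ _ _ HC Huv (Hmul x y) (Hmul y x) E1 E2).
Qed.
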